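(* Let $p$ be an odd prime with $p\equiv 3\pmod 4$. Then for any odd Dirichlet characters $\chi_1,\chi_2$ modulo $p$ with $\chi_1\chi_2\neq\chi_0$, $$\sum_{a=0}^{p-1}\sum_{b=0}^{p-1}\sum_{c=0}^{p-1}\sum_{d=0}^{p-1}\overline{\chi_1}\,\overline{\chi_2}(a^5+b^5-c^5-d^5)\,\chi_1\chi_2(a+b-c-d)=0.$$
   Context: $\chi_0$ denotes the principal character modulo $p$. A character $\chi$ is odd if $\chi(-1)=-1$. Dirichlet characters modulo $p$ are extended by $\chi(x)=0$ when $p\mid x$, and $\overline{\chi}$ denotes the complex conjugate character; $\overline{\chi_1}\,\overline{\chi_2}(x)$ means $\overline{\chi_1}(x)\overline{\chi_2}(x)$. *)

From HB Require Import structures.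
From mathcomp Require Import all_boot all_order all_algebra all_field.
Set Implicit Arguments. Unset Strict Implicit. Unset Printing Implicit Defensive.
Import Order.TTheory GRing.Theory Num.Theory.
Local Open Scope ring_scope.

Definition dirichlet_char (q : nat) (chi : int -> algC) : Prop :=
  [/\ forall m n : int, chi (m * n) = chi m * chi n,
      forall n : int, chi (n + q%:Z) = chi n,
      chi 1 = 1
    & forall n : int, chi n = 0 <-> ~~ coprimez n q%:Z].

Definition principal_char (q : nat) (n : int) : algC :=
  if coprimez n q%:Z then 1 else 0.

Definition odd_char (chi : int -> algC) : Prop := chi (-1) = -1.

From HB Require Import structures.
From mathcomp Require Import all_boot all_order all_algebra all_field all_fingroup all_solvable.
From mathcomp Require Import ring zify.
From Stdlib Require Import FunctionalExtensionality.
Import Order.TTheory GRing.Theory Num.Theory.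
Set Implicit Arguments. Unset Strict Implicit. Unset Printing Implicit Defensive.
Local Open Scope ring_scope.

(* Write psi for chi1 chi2; the summand is conj(psi(a^5+b^5-c^5-d^5)) psi(a+b-c-d).
   Substituting (ta, tb, tc, td) for a unit t multiplies the sum by
   conj(psi t)^5 psi t = conj(psi t)^4, so a nonzero sum forces psi^4 = 1 on units.
   As p - 1 = 2 mod 4, Fermat then gives psi^2 = 1, hence
   psi t = psi t ^ ((p-1)/2) = psi (t ^ ((p-1)/2)) = psi (+-1) = 1, psi being even:
   psi would be principal. *)

Lemma eqn_modMl_coprime (q t a b : nat) :
  coprime t q -> (t * a == t * b %[mod q]) = (a == b %[mod q]).
Proof.
move=> t_cop; wlog le_ab : a b / (a <= b)%N.
  move=> H; case/orP: (leq_total a b) => [/H //|/H].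
  by rewrite eq_sym [(b %% q == a %% q)%N]eq_sym.
rewrite eq_sym [RHS]eq_sym !eqn_mod_dvd ?leq_mul2l ?le_ab ?orbT //.
by rewrite -mulnBr Gauss_dvdr // coprime_sym.
Qed.

Lemma sum_ord_mulmod (V : nmodType) (q t : nat) (F : nat -> V) :
  coprime t q -> \sum_(a < q) F a = \sum_(a < q) F (t * a %% q)%N.
Proof.
move=> t_cop; case: (posnP q) => [->|q_gt0]; first by rewrite !big_ord0.
pose mulmod (a : 'I_q) : 'I_q := Ordinal (ltn_pmod (t * a) q_gt0).
have mulmod_inj : injective mulmod.
  move=> a b /(congr1 val) /eqP; rewrite /= eqn_modMl_coprime //.
  by rewrite !modn_small // => /eqP /val_inj.
by rewrite (reindex_inj mulmod_inj).
Qed.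

Lemma sum4_ord_mulmod (V : nmodType) (q t : nat) (F : nat -> nat -> nat -> nat -> V) :
  coprime t q ->
  \sum_(a < q) \sum_(b < q) \sum_(c < q) \sum_(d < q) F a b c d =
  \sum_(a < q) \sum_(b < q) \sum_(c < q) \sum_(d < q)
     F (t * a %% q)%N (t * b %% q)%N (t * c %% q)%N (t * d %% q)%N.
Proof.
move=> t_cop.
rewrite (sum_ord_mulmod (fun a => \sum_(b < q) \sum_(c < q) \sum_(d < q) F a b c d) t_cop).
apply: eq_bigr => a _; set a' := (t * a %% q)%N.
rewrite (sum_ord_mulmod (fun b => \sum_(c < q) \sum_(d < q) F a' b c d) t_cop).
apply: eq_bigr => b _; set b' := (t * b %% q)%N.
rewrite (sum_ord_mulmod (fun c => \sum_(d < q) F a' b' c d) t_cop).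
apply: eq_bigr => c _.
by rewrite (sum_ord_mulmod (F a' b' _) t_cop).
Qed.

Lemma Euler_exp_totientz (t q : nat) :
  coprime t q -> (q%:Z %| t%:Z ^+ totient q - 1)%Z.
Proof.
by move=> t_cop; rewrite -eqz_mod_dvd -[t%:Z]natz -natrX natz !modz_nat Euler_exp_totient.
Qed.

Lemma dvdz_subXX (d x y : int) (k : nat) : (d %| x - y)%Z -> (d %| x ^+ k - y ^+ k)%Z.
Proof. by move=> dvd_xy; rewrite subrXX dvdz_mulr. Qed.

Lemma dirichlet_charM (q : nat) (chi1 chi2 : int -> algC) :
  dirichlet_char q chi1 -> dirichlet_char q chi2 ->
  dirichlet_char q (fun n => chi1 n * chi2 n).
Proof.
move=> [M1 P1 one1 Z1] [M2 P2 one2 Z2]; split=> [m n|n||n].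
- by rewrite M1 M2 mulrACA.
- by rewrite P1 P2.
- by rewrite one1 one2 mulr1.
split=> [/eqP|/[dup] /Z1 -> _]; last by rewrite mul0r.
by rewrite mulf_eq0 => /orP[/eqP/Z1|/eqP/Z2].
Qed.

Section DirichletCharacter.

Variables (q : nat) (chi : int -> algC).
Hypothesis chi_char : dirichlet_char q chi.

Lemma dchar_addMq (n k : int) : chi (n + k * q%:Z) = chi n.
Proof.
case: (chi_char) => _ chi_per _ _.
have addMq (m : int) (j : nat) : chi (m + j%:Z * q%:Z) = chi m.
  elim: j => [|j IHj]; first by rewrite mul0r addr0.
  have -> : m + j.+1%:Z * q%:Z = m + j%:Z * q%:Z + q%:Z by rewrite intS; ring.
  by rewrite chi_per.
case: k => j; first exact: addMq.
by rewrite -(addMq _ j.+1) NegzE mulNr subrK.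
Qed.

Lemma dchar_eqmod (m n : int) : (q%:Z %| m - n)%Z -> chi m = chi n.
Proof.
by move=> /divzK dvd_mn; rewrite -(dchar_addMq n ((m - n) %/ q%:Z)%Z) dvd_mn addrC subrK.
Qed.

Lemma dchar_modz (m : int) : chi (m %% q%:Z)%Z = chi m.
Proof. by apply: dchar_eqmod; rewrite -eqz_mod_dvd modz_mod. Qed.

Lemma dcharX (m : int) (k : nat) : chi (m ^+ k) = chi m ^+ k.
Proof.
case: (chi_char) => chiM _ chi1 _.
by elim: k => [|k IHk]; rewrite ?expr0 // !exprS chiM IHk.
Qed.

Lemma dchar_totient (t : nat) : coprime t q -> chi t ^+ totient q = 1.
Proof.
case: (chi_char) => _ _ chi1 _ t_cop.
by rewrite -dcharX (dchar_eqmod (Euler_exp_totientz t_cop)) chi1.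
Qed.

Lemma dchar_mul_conj (t : nat) : (0 < q)%N -> coprime t q -> chi t * (chi t)^* = 1.
Proof.
move=> q_gt0 t_cop; rewrite -normCK.
have /eqP := congr1 Num.norm (dchar_totient t_cop).
by rewrite normrX normr1 pexpr_eq1 ?totient_gt0 // => /eqP ->; rewrite expr1n.
Qed.

Lemma dchar_principal :
  (0 < q)%N -> (forall t : nat, coprime t q -> chi t = 1) -> chi = principal_char q.
Proof.
move=> q_gt0 chi_units; apply: functional_extensionality => n; rewrite /principal_char.
case: (chi_char) => _ _ _ chi_eq0.
case: ifP => [n_cop|/negbT/chi_eq0 //].
have chin_neq0 : chi n != 0 by apply/eqP => /chi_eq0; rewrite n_cop.
have r_ge0 : (0 <= (n %% q%:Z)%Z) by rewrite modz_ge0 // eqz_nat -lt0n.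
rewrite -dchar_modz -(gez0_abs r_ge0); apply: chi_units.
by apply/negPn/negP => /chi_eq0; rewrite dchar_modz; apply/eqP.
Qed.

Lemma even_dchar_sqrt1 (x : int) :
  prime q -> chi (-1) = 1 -> (q%:Z %| x ^+ 2 - 1)%Z -> chi x = 1.
Proof.
case: (chi_char) => _ _ chi1 _ q_prime chi_even.
have -> : x ^+ 2 - 1 = (x - 1) * (x - (-1)) by ring.
rewrite dvdzE abszM Euclid_dvdM //.
by case/orP=> /dchar_eqmod ->.
Qed.

End DirichletCharacter.

Lemma even_quartic_dchar_principal (p : nat) (psi : int -> algC) :
  prime p -> (p %% 4 = 3)%N -> dirichlet_char p psi -> psi (-1) = 1 ->
  (forall t : nat, coprime t p -> psi t ^+ 4 = 1) -> psi = principal_char p.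
Proof.
move=> p_prime p_mod4 psi_char psi_even psi4.
apply: (dchar_principal psi_char (prime_gt0 p_prime)) => t t_cop.
have [k totient_p] : exists k, totient p = (4 * k + 2)%N.
  by exists (p %/ 4)%N; rewrite totient_prime // {1}(divn_eq p 4) p_mod4; lia.
have psi2 : psi t ^+ 2 = 1.
  have := dchar_totient psi_char t_cop.
  by rewrite totient_p exprD exprM psi4 // expr1n mul1r.
have -> : psi t = psi (t%:Z ^+ (2 * k + 1)).
  by rewrite (dcharX psi_char) exprD exprM psi2 expr1n mul1r expr1.
apply: (even_dchar_sqrt1 psi_char) => //.
rewrite -exprM; have -> : ((2 * k + 1) * 2 = totient p)%N by rewrite totient_p; lia.
exact: Euler_exp_totientz.
Qed.

Definition moment_term (k : nat) (chi : int -> algC) (a b c d : int) : algC :=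
  (chi (a ^+ k + b ^+ k - c ^+ k - d ^+ k))^* * chi (a + b - c - d).

Definition moment_sum (q k : nat) (chi : int -> algC) : algC :=
  \sum_(a < q) \sum_(b < q) \sum_(c < q) \sum_(d < q) moment_term k chi a b c d.

Section MomentSum.

Variables (q : nat) (chi : int -> algC).
Hypothesis chi_char : dirichlet_char q chi.

Lemma moment_term_eqmod (k : nat) (a b c d a' b' c' d' : int) :
  (q%:Z %| a - a')%Z -> (q%:Z %| b - b')%Z -> (q%:Z %| c - c')%Z -> (q%:Z %| d - d')%Z ->
  moment_term k chi a b c d = moment_term k chi a' b' c' d'.
Proof.
move=> ha hb hc hd.
have dvd_pow_sum j : (q%:Z %| (a ^+ j + b ^+ j - c ^+ j - d ^+ j)
                             - (a' ^+ j + b' ^+ j - c' ^+ j - d' ^+ j))%Z.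
  have -> : (a ^+ j + b ^+ j - c ^+ j - d ^+ j) - (a' ^+ j + b' ^+ j - c' ^+ j - d' ^+ j)
    = (a ^+ j - a' ^+ j) + (b ^+ j - b' ^+ j) - (c ^+ j - c' ^+ j) - (d ^+ j - d' ^+ j).
    by ring.
  by apply: rpredB; [apply: rpredB; [apply: rpredD|]|]; apply: dvdz_subXX.
rewrite /moment_term (dchar_eqmod chi_char (dvd_pow_sum k)).
by have := dvd_pow_sum 1%N; rewrite !expr1 => /(dchar_eqmod chi_char) ->.
Qed.

Lemma moment_termM (k : nat) (t a b c d : int) :
  moment_term k chi (t * a) (t * b) (t * c) (t * d)
  = (chi t)^* ^+ k * chi t * moment_term k chi a b c d.
Proof.
case: (chi_char) => chiM _ _ _; rewrite /moment_term !exprMn.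
have -> : t ^+ k * a ^+ k + t ^+ k * b ^+ k - t ^+ k * c ^+ k - t ^+ k * d ^+ k
          = t ^+ k * (a ^+ k + b ^+ k - c ^+ k - d ^+ k) by ring.
have -> : t * a + t * b - t * c - t * d = t * (a + b - c - d) by ring.
by rewrite !chiM (dcharX chi_char) rmorphM rmorphXn /=; ring.
Qed.

Lemma moment_sum_scale (k t : nat) : (0 < q)%N -> coprime t q ->
  moment_sum q k.+1 chi = (chi t)^* ^+ k * moment_sum q k.+1 chi.
Proof.
move=> q_gt0 t_cop; rewrite /moment_sum.
rewrite [LHS](sum4_ord_mulmod (fun a b c d : nat => moment_term k.+1 chi a b c d) t_cop).
have dvd_modn m : (q%:Z %| (m %% q)%N%:Z - m%:Z)%Z.
  by rewrite -eqz_mod_dvd !modz_nat modn_mod.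
do 4!(rewrite mulr_sumr; apply: eq_bigr => ? _).
rewrite (moment_term_eqmod _ (dvd_modn _) (dvd_modn _) (dvd_modn _) (dvd_modn _)).
rewrite !PoszM moment_termM exprSr -(mulrA _ _ (chi t)) (mulrC _ (chi t)).
by rewrite (dchar_mul_conj chi_char) // mulr1.
Qed.

Lemma moment_sum_neq0_dcharX (k : nat) : (0 < q)%N -> moment_sum q k.+1 chi != 0 ->
  forall t : nat, coprime t q -> chi t ^+ k = 1.
Proof.
move=> q_gt0 sum_neq0 t t_cop.
have := moment_sum_scale k q_gt0 t_cop.
rewrite -{1}[moment_sum _ _ _]mul1r => /(mulIf sum_neq0) conj_k.
by rewrite -[chi t]conjCK -rmorphXn -conj_k rmorph1.
Qed.

End MomentSum.

Theorem lemma2p4 (p : nat) (chi1 chi2 : int -> algC) :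
  prime p -> odd p -> (p %% 4 = 3)%N ->
  dirichlet_char p chi1 -> dirichlet_char p chi2 ->
  odd_char chi1 -> odd_char chi2 ->
  (fun x => chi1 x * chi2 x) <> principal_char p ->
  \sum_(a < p) \sum_(b < p) \sum_(c < p) \sum_(d < p)
     ((chi1 ((a%:Z) ^+ 5 + (b%:Z) ^+ 5 - (c%:Z) ^+ 5 - (d%:Z) ^+ 5))^*
      * (chi2 ((a%:Z) ^+ 5 + (b%:Z) ^+ 5 - (c%:Z) ^+ 5 - (d%:Z) ^+ 5))^*
      * (chi1 (a%:Z + b%:Z - c%:Z - d%:Z) * chi2 (a%:Z + b%:Z - c%:Z - d%:Z)))
  = 0.
Proof.
move=> p_prime _ p_mod4 chi1_char chi2_char chi1_odd chi2_odd psi_nonprincipal.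
have psi_char := dirichlet_charM chi1_char chi2_char.
have psi_even : chi1 (-1) * chi2 (-1) = 1 by rewrite chi1_odd chi2_odd mulrNN mulr1.
transitivity (moment_sum p 5 (fun x => chi1 x * chi2 x)).
  by do 4!(apply: eq_bigr => ? _); rewrite /moment_term rmorphM /=.
have [//|sum_neq0] := eqVneq (moment_sum p 5 (fun x => chi1 x * chi2 x)) 0.
case: psi_nonprincipal; apply: even_quartic_dchar_principal => //.
exact: (moment_sum_neq0_dcharX psi_char (prime_gt0 p_prime)).
Qed.
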